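(* Let $\mathcal{A} \in \{\text{GS}, \text{DFS}, \text{LDFS}, \text{MCS}, \text{MNS}\}$ and let $v$ be a vertex of a finite, simple, undirected, connected graph $G$ with at least two vertices. The following are equivalent: (i) $v$ is the $\mathcal{L}$-root leaf of some $\mathcal{A}$-ordering of $G$; (ii) $v$ is an $\mathcal{L}$-leaf of some $\mathcal{A}$-ordering of $G$; (iii) $v$ is not a cut vertex of $G$.
   Context: A vertex ordering of $G$ is a bijection $\sigma:\{1,\dots,n\}\to V(G)$; $u \prec_\sigma w$ means $u$ comes before $w$. Searches are defined by the following label search: initially every vertex has label $\emptyset$; for $i=1,\dots,n$, choose any unnumbered vertex $x$ such that there is no unnumbered $y$ with $\mathrm{label}(x) \prec_{\mathcal{A}} \mathrm{label}(y)$, set $\sigma(i)=x$, and add $i$ to the labels of all unnumbered neighbors of $x$. The orderings produced are the $\mathcal{A}$-orderings. The strict partial orders on finite subsets of positive integers are: GS: $A \prec B$ iff $A=\emptyset$ and $B\neq\emptyset$. DFS: $A \prec B$ iff ($A=\emptyset$, $B\neq\emptyset$) or $\max(A)<\max(B)$. LDFS: $A \prec B$ iff $A\subsetneq B$ or $\max(A\setminus B)<\max(B\setminus A)$. MCS: $A\prec B$ iff $|A|<|B|$. MNS: $A \prec B$ iff $A \subsetneq B$. For a GS ordering $\sigma$ of connected $G$, the $\mathcal{L}$-tree of $\sigma$ is the spanning tree containing, for each vertex $v\neq\sigma(1)$, the edge from $v$ to its rightmost neighbor $w$ with $w\prec_\sigma v$. A vertex is an $\mathcal{L}$-leaf of $\sigma$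 if it is a leaf of the $\mathcal{L}$-tree; it is the $\mathcal{L}$-root leaf if additionally it equals $\sigma(1)$. *)

From mathcomp Require Import all_boot.
Set Implicit Arguments. Unset Strict Implicit. Unset Printing Implicit Defensive.

(* A finite simple undirected graph: vertex type T : finType, adjacency
   e : rel T, symmetric and irreflexive. *)

(* Vertex orderings are represented as duplicate-free sequences s of all
   vertices: sigma(i) = nth _ s (i-1) for i = 1..n.  Labels are finite sets
   of positions, i.e. subsets of {1,..,n}, represented inside 'I_(n.+1). *)
Section LabelSearch.
Variable T : finType.
Variable e : rel T.

Definition labT := {set 'I_(#|T|.+1)}.

Inductive search := GS | DFS | LDFS | MCS | MNS.

Definition setmax (A : labT) : nat := \max_(i in A) (i : nat).

Definition search_prec (a : search) (A B : labT) : bool :=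
  match a with
  | GS => (A == set0) && (B != set0)
  | DFS => ((A == set0) && (B != set0))
           || [&& A != set0, B != set0 & setmax A < setmax B]
  | LDFS => (A \proper B)
           || [&& A :\: B != set0, B :\: A != set0 &
                  setmax (A :\: B) < setmax (B :\: A)]
  | MCS => #|A| < #|B|
  | MNS => A \proper B
  end.

(* label of vertex x just before step i+1 (0-based index i), i.e. the set of
   positions j in {1..i} such that sigma(j) is adjacent to x. *)
Definition label (s : seq T) (i : nat) (x : T) : labT :=
  [set j : 'I_(#|T|.+1) | (0 < j <= i) && e (nth x s j.-1) x].

Definition is_ordering (s : seq T) : Prop := uniq s /\ size s = #|T|.

Definition is_search_ordering (a : search) (s : seq T) : Prop :=
  is_ordering s /\
  forall (i : nat) (x0 : T), i < size s ->
    forall y : T, y \notin take i s ->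
      ~~ search_prec a (label s i (nth x0 s i)) (label s i y).

Definition ltree_edge (s : seq T) (u w : T) : bool :=
  [&& index w s < index u s, e w u &
      [forall w' : T, (index w s < index w' s < index u s) ==> ~~ e w' u]].

Definition ltree_deg (s : seq T) (v : T) : nat :=
  #|[set u | ltree_edge s u v || ltree_edge s v u]|.

Definition is_Lleaf (s : seq T) (v : T) : Prop := ltree_deg s v = 1.

Definition is_Lroot_leaf (s : seq T) (v : T) : Prop :=
  is_Lleaf s v /\ (exists x0 : T, s <> [::] /\ nth x0 s 0 = v).

Definition connected_graph : Prop := forall x y : T, connect e x y.

Definition del_vertex (v : T) : rel T := [rel a b | [&& e a b, a != v & b != v]].

(* v is a cut vertex: deleting v disconnects two vertices that were
   connected in G (i.e. increases the number of connected components). *)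
Definition cut_vertex (v : T) : Prop :=
  exists x y : T, [/\ x != v, y != v, connect e x y & ~~ connect (del_vertex v) x y].

End LabelSearch.

From mathcomp Require Import all_boot.
Set Implicit Arguments. Unset Strict Implicit. Unset Printing Implicit Defensive.

(* Each of the five label orders puts the empty label below every other, so in
   these orderings of a connected graph every vertex but the first has an
   earlier neighbour, hence a parent in the L-tree.  If v is an L-leaf, the
   parent pointers lead every other vertex to the first vertex (or, when v is
   the first vertex, to its only L-neighbour) without passing through v, so v
   is not a cut vertex.
   Conversely, if G - v is connected, start the search at v and, from the
   third step on, pick a vertex of maximal rank (a linear extension of the
   label order) among those with a numbered neighbour other than v.  Such
   vertices exist as G - v is connected, and every other unnumbered vertex
   has label at most {1}, so the search rule holds.  Then no vertex after the second is an L-child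
   of v, i.e. v is the L-root leaf. *)

Lemma sum_expn2_lt n (S : {set 'I_n}) m :
  (forall i, i \in S -> i < m) -> \sum_(i in S) 2 ^ i < 2 ^ m.
Proof.
move=> ltSm.
have geom k : (\sum_(0 <= i < k) 2 ^ i).+1 = 2 ^ k.
  by elim: k => [|k IH]; rewrite ?big_nil // big_nat_recr //= -addSn IH expnS mul2n addnn.
rewrite -geom ltnS -big_enum /= -(big_map val xpredT (fun i => 2 ^ i)).
apply: (@uniq_sub_le_big _ addn leq leqnn (fun x y => leq_addr y x)) => [||_ /mapP [j jS ->]].
- by rewrite map_inj_uniq ?enum_uniq //; exact: val_inj.
- exact: iota_uniq.
- by rewrite mem_iota add0n subn0 ltSm // -mem_enum.
Qed.

Section SearchOrders.
Variable T : finType.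
Implicit Types (a : search) (A B : labT T).
Local Notation N := #|T|.+1.

Lemma leq_setmax A (i : 'I_N) : i \in A -> i <= setmax A.
Proof. exact: (@leq_bigmax_cond _ (mem A) (fun i : 'I_N => i : nat)). Qed.

Lemma setmax_mem A : A != set0 -> exists2 i : 'I_N, i \in A & setmax A = i.
Proof.
by rewrite /setmax -card_gt0 => /(eq_bigmax_cond (fun i : 'I_N => i : nat)) [i iA ->]; exists i.
Qed.

Lemma search_prec_irr a A : ~~ search_prec a A A.
Proof. by case: a => /=; rewrite ?ltnn ?properE ?setDv ?eqxx ?andbN ?andbF. Qed.

Lemma search_prec0 a B : B != set0 -> search_prec a set0 B.
Proof.
move=> B_neq0; case: a => /=; rewrite ?eqxx ?B_neq0 ?cards0 ?card_gt0 //;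
by rewrite properE sub0set subset0 B_neq0.
Qed.

Lemma search_precN_sub1 a A B (j k : 'I_N) :
  j \in A -> B \subset [set k] -> k <= j -> ~~ search_prec a A B.
Proof.
move=> jA sBk lekj.
have A_neq0 : A != set0 by apply/set0Pn; exists j.
have cardA : 0 < #|A| by rewrite card_gt0.
have cardB : #|B| <= 1 by rewrite -(cards1 k) subset_leq_card.
have Bk b : b \in B -> b = k by move/(subsetP sBk); rewrite inE => /eqP.
have notAB : ~~ (A \proper B).
  by apply/negP => /proper_card; rewrite ltnNge (leq_trans cardB cardA).
case: a => /=.
- by rewrite (negbTE A_neq0).
- rewrite (negbTE A_neq0) /=; apply/negP => /andP [/setmax_mem [b /Bk -> ->]].
  by rewrite ltnNge (leq_trans lekj (leq_setmax jA)).
- rewrite negb_or notAB /=; apply/negP => /and3P [_ /setmax_mem [b]].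
  rewrite inE => /andP [bNA /Bk bk] ->; subst b.
  have jNB : j \notin B by apply: contraNN bNA => /Bk <-.
  have jAB : j \in A :\: B by rewrite inE jNB jA.
  by rewrite ltnNge (leq_trans lekj (leq_setmax jAB)).
- by rewrite -leqNgt (leq_trans cardB cardA).
- exact: notAB.
Qed.

(* A linear extension of each order: LDFS compares labels as binary numbers. *)
Definition search_rank a A : nat :=
  match a with
  | GS => A != set0
  | DFS => if A == set0 then 0 else (setmax A).+1
  | LDFS => \sum_(i in A) 2 ^ i
  | MCS | MNS => #|A|
  end.

Lemma search_rank_lt a A B : search_prec a A B -> search_rank a A < search_rank a B.
Proof.
case: a => /=.
- by case/andP => /eqP -> ->; rewrite eqxx.
- by case/orP => [/andP [/eqP -> /negbTE ->] | /and3P [/negbTE -> /negbTE ->]];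
    rewrite ?eqxx.
- have sum_split (X Y : labT T) :
      \sum_(i in X) 2 ^ i = \sum_(i in X :&: Y) 2 ^ i + \sum_(i in X :\: Y) 2 ^ i.
    by rewrite (big_setID Y).
  case/orP => [ltAB | /and3P [_ BA_neq0 ltmax]].
  + rewrite (sum_split B A) (setIidPr (proper_sub ltAB)) -[X in X < _]addn0 ltn_add2l.
    have [_ [x xB xNA]] := properP ltAB.
    by rewrite (bigD1 x) ?inE ?xB ?xNA //= addn_gt0 expn_gt0.
  + rewrite (sum_split A B) (sum_split B A) setIC ltn_add2l.
    have [m mBA maxBA] := setmax_mem BA_neq0.
    rewrite [X in _ < X](bigD1 m) //= -maxBA; apply: leq_trans (leq_addr _ _).
    by apply: sum_expn2_lt => i iAB; apply: leq_ltn_trans (leq_setmax iAB) ltmax.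
- by [].
- exact: proper_card.
Qed.

Lemma search_prec_maximal a (X : finType) (C : pred X) (f : X -> labT T) x0 :
  C x0 -> exists2 x, C x & forall y, C y -> ~~ search_prec a (f x) (f y).
Proof.
move=> Cx0; have [x Cx max_x] := arg_maxnP (fun x => search_rank a (f x)) Cx0.
exists x => // y /max_x; apply: contraL => /search_rank_lt.
by rewrite ltnNge.
Qed.

End SearchOrders.

Lemma connect_cross_edge (T : finType) (r : rel T) (P : pred T) x y :
  connect r x y -> P x -> ~~ P y -> exists u w, [/\ P u, ~~ P w & r u w].
Proof.
move/connectP=> [p]; elim: p x => [|z p IH] x /=; first by move=> _ -> ->.
case/andP=> rxz path_zp last_zp Px NPy.
by case: (boolP (P z)) => [Pz | NPz]; [apply: IH path_zp last_zp Pz NPy | exists x, z].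
Qed.

Section Orderings.
Variables (T : finType) (e : rel T).
Implicit Types (a : search) (p s : seq T).

Definition search_rule a p : Prop :=
  forall i x0, i < size p -> forall y, y \notin take i p ->
    ~~ search_prec a (label e p i (nth x0 p i)) (label e p i y).

Lemma ordering_mem s x : is_ordering s -> x \in s.
Proof.
case=> s_uniq s_size; apply/negPn/negP => xNs.
have xs_uniq : uniq (x :: s) by rewrite /= xNs.
by have := max_card (mem (x :: s)); rewrite (card_uniqP xs_uniq) /= s_size ltnn.
Qed.

Lemma label0 p y : label e p 0 y = set0.
Proof. by apply/setP => j; rewrite !inE lt0n leqn0 andNb. Qed.

Lemma label_rcons p x i y : i <= size p -> label e (rcons p x) i y = label e p i y.
Proof.
move=> le_ip; apply/setP => j; rewrite !inE.
case: (boolP (0 < j <= i)) => //= /andP [j_gt0 le_ji].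
by rewrite nth_rcons (leq_trans _ le_ip) // prednK.
Qed.

Lemma labelE p i y : uniq p -> i <= size p ->
  label e p i y = [set inord (index w p).+1 | w in take i p & e w y].
Proof.
move=> p_uniq le_ip.
have le_pT : size p <= #|T| by rewrite -(card_uniqP p_uniq) max_card.
apply/setP => j; rewrite inE; apply/idP/imsetP => [/andP [/andP [j_gt0 le_ji] ej] | [w]].
- have lt_jp : j.-1 < size p by rewrite prednK // (leq_trans le_ji).
  exists (nth y p j.-1); last by rewrite index_uniq // prednK // inord_val.
  by rewrite inE ej andbT in_take_leq // index_uniq // prednK.
- rewrite inE in_take_leq // => /andP [lt_wi ew] ->.
  have w_p : w \in p by rewrite -index_mem (leq_trans lt_wi).
  by rewrite inordK ?ltnS ?(leq_trans _ le_pT) ?(leq_trans lt_wi) //= nth_index.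
Qed.

Lemma search_rule_rcons a p x : search_rule a p ->
    (forall y, y \notin p -> ~~ search_prec a (label e p (size p) x) (label e p (size p) y)) ->
  search_rule a (rcons p x).
Proof.
have take_rcons j : j <= size p -> take j (rcons p x) = take j p.
  by move=> le_jp; rewrite -cats1 takel_cat.
move=> rule_p rule_x i x0; rewrite size_rcons ltnS leq_eqVlt => /predU1P [-> | lt_ip] y.
  by rewrite take_rcons // take_size nth_rcons ltnn eqxx !label_rcons //; apply: rule_x.
by rewrite take_rcons ?nth_rcons ?lt_ip ?label_rcons ?(ltnW lt_ip) //; apply: rule_p.
Qed.

Lemma ltree_parent_exists s x w :
  index w s < index x s -> e w x -> exists u, ltree_edge e s x u.
Proof.
move=> lt_wx ewx; pose P u := (index u s < index x s) && e u x.
have [u /andP [lt_ux eux] max_u] :=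
  @arg_maxnP _ w P (fun u => index u s) (introT andP (conj lt_wx ewx)).
exists u; rewrite /ltree_edge lt_ux eux; apply/forallP => u'.
apply/implyP => /andP [lt_uu' lt_u'x].
by apply: contraL lt_uu' => eu'x; rewrite -leqNgt; apply: max_u; rewrite /P lt_u'x.
Qed.

Lemma del_vertex_sym v : symmetric e -> symmetric (del_vertex e v).
Proof. by move=> e_sym x y; rewrite /del_vertex /= e_sym [(x != v) && _]andbC. Qed.

End Orderings.

Section LeafNotCut.
Variables (T : finType) (e : rel T) (a : search) (s : seq T).
Hypotheses (e_sym : symmetric e) (e_conn : connected_graph e).
Hypothesis s_search : is_search_ordering e a s.

Lemma search_left_neighbour x :
  0 < index x s -> exists2 w, index w s < index x s & e w x.
Proof.
case: s_search => [[s_uniq _] s_rule] ix_gt0.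
have x_s : x \in s by apply: ordering_mem s_search.1.
have lt_xs : index x s < size s by rewrite index_mem.
have take_x := in_take_leq _ (ltnW lt_xs).
have first_x : nth x s 0 \in take (index x s) s.
  by rewrite take_x index_uniq // (ltn_trans ix_gt0).
have xNx : x \notin take (index x s) s by rewrite take_x ltnn.
have [u [w [u_x wNx euw]]] := connect_cross_edge (e_conn (nth x s 0) x) first_x xNx.
(* The unnumbered vertex w has a nonempty label, and x was chosen before it. *)
have : label e s (index x s) x != set0.
  apply: contraNneq (s_rule _ x lt_xs w wNx) => lab_x0.
  rewrite nth_index // lab_x0 search_prec0 //; apply/set0Pn; exists (inord (index u s).+1).
  by rewrite labelE ?(ltnW lt_xs) //; apply: imset_f; rewrite inE euw andbT.
rewrite labelE ?(ltnW lt_xs) // => /set0Pn [j /imsetP [w']].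
by rewrite inE take_x => /andP [lt_w'x ew'x] _; exists w'.
Qed.

Lemma search_ltree_parent x : 0 < index x s -> exists u, ltree_edge e s x u.
Proof. by case/search_left_neighbour=> w; apply: ltree_parent_exists. Qed.

Lemma Lleaf_not_cut v : is_Lleaf e s v -> ~ cut_vertex e v.
Proof.
have s_mem x : x \in s by apply: ordering_mem s_search.1.
move=> /eqP/cards1P [c /setP Lnbr_v].
have Lnbr_vP u : ltree_edge e s u v || ltree_edge e s v u -> u = c.
  by move=> uv; have := Lnbr_v u; rewrite !inE uv => /esym/eqP.
(* Parent pointers reach the root without meeting the leaf v, unless v is the
   root, in which case they stop at its only child c. *)
pose r := if index v s == 0 then c else nth v s 0.
have to_r n x : index x s < n -> x != v -> connect (del_vertex e v) x r.
  elim: n x => // n IH x; rewrite ltnS => le_xn xNv.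
  have [ix0 | ix_gt0] := posnP (index x s).
    have x_first : nth v s 0 = x by rewrite -ix0 nth_index.
    have iv_neq0 : index v s != 0.
      by apply: contra_neq xNv => iv0; rewrite -x_first -iv0 nth_index.
    by rewrite /r (negbTE iv_neq0) x_first connect0.
  have [u xu] := search_ltree_parent ix_gt0.
  have [uv | uNv] := eqVneq u v.
    have xc : x = c by apply: Lnbr_vP; rewrite -uv xu.
    rewrite /r -xc; case: eqP => [_ | /eqP]; first exact: connect0.
    rewrite -lt0n => /search_ltree_parent [u' vu'].
    have u'x : u' = x by rewrite xc; apply: Lnbr_vP; rewrite vu' orbT.
    case/and3P: vu' => + _ _; case/and3P: xu => + _ _.
    by rewrite uv u'x => /ltn_trans h /h; rewrite ltnn.
  case/and3P: (xu) => lt_ux eux _.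
  apply: connect_trans (IH u (leq_trans lt_ux le_xn) uNv).
  by apply: connect1; rewrite /del_vertex /= xNv uNv e_sym eux.
case=> x [y [xNv yNv _ /negP]]; apply.
apply: connect_trans (to_r _ x (ltnSn _) xNv) _.
by rewrite (sym_connect_sym (del_vertex_sym v e_sym)) (to_r _ y (ltnSn _) yNv).
Qed.

End LeafNotCut.

Section RootLeafOrdering.
Variables (T : finType) (e : rel T) (a : search) (v : T).
Hypothesis e_conn : connected_graph e.
Hypothesis v_not_cut : forall x y, x != v -> y != v -> connect (del_vertex e v) x y.

(* The last condition keeps every vertex after the second from becoming an
   L-child of the first one. *)
Definition root_leaf_prefix (p : seq T) : Prop :=
  [/\ uniq p, search_rule e a p &
      {in p, forall u, 1 < index u p -> exists2 w, 0 < index w p < index u p & e w u}].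

Lemma root_leaf_prefix_start : 1 < #|T| -> exists x, root_leaf_prefix [:: v; x].
Proof.
move=> card_T; have : 0 < #|predC1 v| by rewrite cardC1 -subn1 subn_gt0.
case/card_gt0P=> z; rewrite inE => zNv.
have [_ [x [/eqP -> xNv evx]]] := connect_cross_edge (P := pred1 v) (e_conn v z) (eqxx v) zNv.
have lt1N : 1 < #|T|.+1 by rewrite ltnS ltnW.
exists x; split.
- by rewrite /= inE eq_sym xNv.
- apply: (search_rule_rcons (p := [:: v])) => [i x0 | y _].
    by rewrite ltnS leqn0 => /eqP -> y _; rewrite !label0 search_prec_irr.
  apply: (@search_precN_sub1 _ _ _ _ (inord 1) (inord 1)) => //.
    by rewrite inE inordK.
  apply/subsetP => j; rewrite !inE => /andP [/andP [j_gt0 le_j1] _].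
  by apply/eqP/val_inj; rewrite /= inordK //; apply/eqP; rewrite eqn_leq le_j1.
- by move=> u; rewrite -index_mem ltnS => le_u1; rewrite ltnNge le_u1.
Qed.

Lemma root_leaf_prefix_rcons q : 0 < size q -> (size q).+1 < #|T| ->
  root_leaf_prefix (v :: q) -> exists x, root_leaf_prefix (rcons (v :: q) x).
Proof.
set p := v :: q => q_gt0 lt_pT [p_uniq p_rule p_early].
have [z zNp] : exists z, z \notin p.
  case: (pickP [predC p]) => [z zNp | all_p]; first by exists z.
  suff : #|T| <= size p by rewrite leqNgt lt_pT.
  rewrite -(card_uniqP p_uniq); apply/subset_leq_card/subsetP => y _.
  by have := all_p y; rewrite /= => /negbFE.
have zNv : z != v by apply: contraNneq zNp => ->; rewrite inE eqxx.
have b_q : nth v q 0 \in q by rewrite mem_nth.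
have bNv : nth v q 0 != v by apply: contraTneq b_q => ->; case/andP: p_uniq.
have b_p : nth v q 0 \in p by rewrite inE b_q orbT.
have [u [w []]] := connect_cross_edge (P := [pred y | y \in p]) (v_not_cut bNv zNv) b_p zNp.
move=> /= u_p wNp /and3P [euw uNv _].
pose C := [pred y | (y \notin p) && [exists u, [&& u \in p, u != v & e u y]]].
have Cw : C w by rewrite /= wNp; apply/existsP; exists u; rewrite u_p uNv euw.
have [x /andP [xNp /existsP [u' /and3P [u'_p u'Nv eu'x]]] max_x] :=
  search_prec_maximal a (label e p (size p)) Cw.
have iu'_gt0 : 0 < index u' p by rewrite /= eq_sym (negbTE u'Nv).
have lt_u'p : index u' p < size p by rewrite index_mem.
have index_rcons y : y \in p -> index y (rcons p x) = index y p.
  by move=> y_p; rewrite -cats1 index_cat y_p.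
exists x; split; rewrite -[v :: rcons q x]/(rcons p x).
- by rewrite rcons_uniq xNp.
- apply: search_rule_rcons => // y yNp; have [/max_x // | yNC] := boolP (C y).
  apply: (@search_precN_sub1 _ _ _ _ (inord (index u' p).+1) (inord 1)).
  + by rewrite labelE // take_size; apply: imset_f; rewrite inE u'_p.
  + apply/subsetP => j; rewrite labelE // take_size => /imsetP [w'].
    rewrite inE => /andP [w'_p ew'y] ->; have /eqP -> : w' == v.
      apply: contraR yNC => w'Nv; rewrite /= yNp.
      by apply/existsP; exists w'; rewrite w'_p w'Nv.
    by rewrite index_head inE.
  + by rewrite !inordK // ltnS ?(ltn_trans lt_u'p lt_pT) // (leq_trans _ lt_pT).
- have index_x : index x (rcons p x) = size p.
    by rewrite -cats1 index_cat (negbTE xNp) /= eqxx addn0.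
  move=> y; rewrite mem_rcons inE => /predU1P [-> _ | y_p].
    by exists u'; rewrite // index_x index_rcons // iu'_gt0.
  rewrite index_rcons // => /(p_early y y_p) [w' /andP [iw'_gt0 lt_w'y] ew'y].
  have w'_p : w' \in p by rewrite -index_mem (ltn_trans lt_w'y) // index_mem.
  by exists w'; rewrite // !index_rcons // iw'_gt0.
Qed.

Lemma root_leaf_prefix_Lroot_leaf q : is_search_ordering e a (v :: q) -> 0 < size q ->
  root_leaf_prefix (v :: q) -> is_Lroot_leaf e (v :: q) v.
Proof.
case: q => // b q s_search _ [s_uniq _ s_early]; split; last by exists v.
set s := v :: b :: q.
have bNv : b != v by apply: contraTneq s_uniq => ->; rewrite /= inE eqxx.
have index_v : index v s = 0 by rewrite /= eqxx.
have index_b : index b s = 1 by rewrite /= eq_sym (negbTE bNv) eqxx.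
apply/eqP/cards1P; exists b; apply/setP => u; rewrite !inE.
have -> : ltree_edge e s v u = false by rewrite /ltree_edge index_v.
rewrite orbF; apply/idP/eqP => [/and3P [iu_gt0 _ /forallP no_between] | ->].
  rewrite index_v in iu_gt0; have u_s : u \in s by apply: ordering_mem s_search.1.
  have [lt1u | | iu1] := ltngtP 1 (index u s).
  - have [w /andP [iw_gt0 lt_wu] ewu] := s_early u u_s lt1u.
    by have := no_between w; rewrite index_v lt_wu iw_gt0 ewu.
  - by rewrite ltnNge iu_gt0.
  - by rewrite -(nth_index v u_s) -iu1.
have [w] : exists2 w, index w s < index b s & e w b.
  by apply: (search_left_neighbour e_conn s_search); rewrite index_b.
rewrite index_b ltnS leqn0 /= => /eqP; case: eqP => // <- _ evb.
rewrite /ltree_edge index_v index_b evb; apply/forallP => w'.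
by case: (index w' s) => [|[]].
Qed.

End RootLeafOrdering.

Lemma not_cut_Lroot_leaf a (T : finType) (e : rel T) v :
    1 < #|T| -> connected_graph e -> ~ cut_vertex e v ->
  exists s, is_search_ordering e a s /\ is_Lroot_leaf e s v.
Proof.
move=> card_T e_conn v_not_cut.
have G_v_conn x y : x != v -> y != v -> connect (del_vertex e v) x y.
  move=> xNv yNv; apply/negPn/negP => NGxy; apply: v_not_cut.
  by exists x, y; split.
have prefix k : 1 < k <= #|T| -> exists2 q, (size q).+1 = k & root_leaf_prefix e a (v :: q).
  elim: k => // k IH /andP [lt1k le_kT]; have [lt1k' | k1] := ltnP 1 k; last first.
    have [x Px] := root_leaf_prefix_start a v e_conn card_T.
    by exists [:: x] => //; apply/eqP; rewrite /= eqSS eqn_leq k1 andbT -ltnS.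
  have [q size_q Pq] := IH (introT andP (conj lt1k' (ltnW le_kT))).
  have q_gt0 : 0 < size q by rewrite -ltnS size_q.
  have lt_qT : (size q).+1 < #|T| by rewrite size_q.
  have [x Px] := root_leaf_prefix_rcons G_v_conn q_gt0 lt_qT Pq.
  by exists (rcons q x); rewrite ?size_rcons ?size_q.
have [q size_q Pq] := prefix #|T| (introT andP (conj card_T (leqnn _))).
have s_search : is_search_ordering e a (v :: q) by case: Pq => q_uniq q_rule _.
exists (v :: q); split; first by [].
by apply: (root_leaf_prefix_Lroot_leaf e_conn s_search); rewrite // -ltnS size_q.
Qed.

Theorem theorem2 (a : search) (T : finType) (e : rel T)
  (e_sym : symmetric e) (e_irr : irreflexive e)
  (hT : 2 <= #|T|) (hconn : connected_graph e) (v : T) :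
  ((exists s, is_search_ordering e a s /\ is_Lroot_leaf e s v) <->
   (exists s, is_search_ordering e a s /\ is_Lleaf e s v)) /\
  ((exists s, is_search_ordering e a s /\ is_Lleaf e s v) <->
   ~ cut_vertex e v).
Proof.
have leaf_not_cut : (exists s, is_search_ordering e a s /\ is_Lleaf e s v) -> ~ cut_vertex e v.
  by case=> s [s_search]; exact: (Lleaf_not_cut e_sym hconn s_search).
have not_cut_root := not_cut_Lroot_leaf a hT hconn.
split; split.
- by case=> s [s_search [v_leaf _]]; exists s.
- by move/leaf_not_cut/not_cut_root.
- exact: leaf_not_cut.
- by case/not_cut_root=> s [s_search [v_leaf _]]; exists s.
Qed.
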